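(* Let $V$ be a finite set with positive element weights ($\vert A \vert$ = total weight of $A \subseteq V$), let $\mathcal{P}, \mathcal{P}'$ be partitions of $V$ into nonempty parts, and let $P_s \ne P_t \in \mathcal{P}$. Let $\mathcal{S}_s, \mathcal{S}_t \subseteq \mathcal{P}$ with $P_s \in \mathcal{S}_s$, $P_t \in \mathcal{S}_t$ and $\mathcal{S}_s \cap \mathcal{S}_t = \emptyset$, and let $\mathcal{S} \subseteq \mathcal{P}$ with $\mathcal{S} \supseteq \mathcal{S}_s$ and $\mathcal{S} \cap \mathcal{S}_t = \emptyset$. Define $$b(\mathcal{S}_s, \mathcal{S}_t) := \sum_{P' \in \mathcal{P}'} \min\{\vert U_{\mathcal{S}_s} \cap P' \vert, \vert U_{\mathcal{S}_t} \cap P' \vert\}.$$ Then $b(\mathcal{S}_s, \mathcal{S}_t) \le \phi_{\mathcal{P}'}(\mathcal{S})$, where $\phi_{\mathcal{P}'}(\mathcal{S}) := \min_{\mathcal{S}' \subseteq \mathcal{P}'} \vert U_{\mathcal{S}} \triangle U_{\mathcal{S}'} \vert$.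
   Context: $U_{\mathcal{S}}$ denotes the union of the sets in $\mathcal{S}$; $\triangle$ is symmetric difference. *)

From mathcomp Require Import all_boot all_order all_algebra.
Set Implicit Arguments. Unset Strict Implicit. Unset Printing Implicit Defensive.
Import Order.TTheory GRing.Theory Num.Theory.
Local Open Scope ring_scope.

Definition wt (R : realFieldType) (T : finType) (w : T -> R) (A : {set T}) : R :=
  \sum_(x in A) w x.

Definition symdiff (T : finType) (A B : {set T}) : {set T} := (A :\: B) :|: (B :\: A).

Definition bval (R : realFieldType) (T : finType) (w : T -> R)
  (P' : {set {set T}}) (Ss St : {set {set T}}) : R :=
  \sum_(Q in P') Num.min (wt w (cover Ss :&: Q)) (wt w (cover St :&: Q)).

(* phi_{P'}(S) = min_{S' subset P'} |U_S triangle U_S'| ; the minimizer is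
   obtained with arg min over subsets S' of P' (set0 is a valid candidate). *)
Definition phi (R : realFieldType) (T : finType) (w : T -> R)
  (P' : {set {set T}}) (S : {set {set T}}) : R :=
  wt w (symdiff (cover S)
    (cover (@Order.arg_min _ R _ set0 (fun S' : {set {set T}} => S' \subset P')
      (fun S' => wt w (symdiff (cover S) (cover S')))))).

From mathcomp Require Import all_boot all_order all_algebra.
Set Implicit Arguments. Unset Strict Implicit. Unset Printing Implicit Defensive.
Import Order.TTheory GRing.Theory Num.Theory.
Local Open Scope ring_scope.

(* For every S' contained in P', the block Q of P' lies either inside or
   outside U_{S'}.  In the first case Q meets U_{S_t}, which avoids U_S,
   only within U_{S'} \ U_S; in the second case Q meets U_{S_s}, which is
   contained in U_S, only within U_S \ U_{S'}.  Either way the weight of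
   (U_S triangle U_{S'}) inside Q is at least the minimum in b, and summing
   over the blocks Q gives b <= |U_S triangle U_{S'}|, in particular for the
   minimising S'. *)

Section Weight.

Variables (R : realFieldType) (T : finType) (w : T -> R).

Lemma wt_subset (A B : {set T}) :
  (forall x, 0 <= w x) -> A \subset B -> wt w A <= wt w B.
Proof.
move=> w_ge0 sAB; rewrite /wt [leRHS](big_setID A) /= (setIidPr sAB).
by rewrite lerDl sumr_ge0.
Qed.

Lemma wt_partition (P : {set {set T}}) (D : {set T}) :
  partition P [set: T] -> wt w D = \sum_(Q in P) wt w (D :&: Q).
Proof.
move=> partP; rewrite /wt.
transitivity (\sum_(x in [set: T] | x \in D) w x).
  by apply: eq_bigl => x; rewrite inE.
rewrite (set_partition_big_cond _ partP).
by apply: eq_bigr => Q _; apply: eq_bigl => x; rewrite !inE andbC.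
Qed.

End Weight.

Lemma mem_cover_trivIset (T : finType) (P B : {set {set T}}) (A : {set T}) x :
  trivIset P -> B \subset P -> A \in P -> x \in A -> (x \in cover B) = (A \in B).
Proof.
move=> trivP sBP AP xA; apply/bigcupP/idP => [[C BC xC] | BA]; last by exists A.
by rewrite -(def_pblock trivP AP xA) (def_pblock trivP (subsetP sBP C BC) xC).
Qed.

Lemma min_wt_le_wt_symdiffI (R : realFieldType) (T : finType) (w : T -> R)
    (X Y U W Q : {set T}) :
  (forall x, 0 <= w x) -> X \subset U -> [disjoint Y & U] ->
  (Q \subset W) || [disjoint Q & W] ->
  Num.min (wt w (X :&: Q)) (wt w (Y :&: Q)) <= wt w (symdiff U W :&: Q).
Proof.
move=> w_ge0 /subsetP sXU dYU /orP[/subsetP sQW | dQW]; rewrite ge_min.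
- apply/orP; right; apply: wt_subset => //; apply/subsetP => x /setIP[Yx Qx].
  by rewrite !inE Qx (disjointFr dYU Yx) sQW.
- apply/orP; left; apply: wt_subset => //; apply/subsetP => x /setIP[Xx Qx].
  by rewrite !inE Qx sXU ?(disjointFr dQW Qx).
Qed.

Lemma bval_le_wt_symdiff (R : realFieldType) (T : finType) (w : T -> R)
    (P P' Ss St S S' : {set {set T}}) :
  (forall x, 0 <= w x) -> trivIset P -> partition P' [set: T] ->
  St \subset P -> S \subset P -> Ss \subset S -> [disjoint S & St] ->
  S' \subset P' ->
  bval w P' Ss St <= wt w (symdiff (cover S) (cover S')).
Proof.
move=> w_ge0 trivP partP' StP SP sSsS dSSt sS'P'.
have trivP' : trivIset P' by case/and3P: partP'.
have sUsU : cover Ss \subset cover S.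
  apply/subsetP => x /bigcupP[C SsC xC].
  by apply/bigcupP; exists C; rewrite ?(subsetP sSsS).
have dUtU : [disjoint cover St & cover S].
  rewrite disjoints_subset; apply/subsetP => x /bigcupP[C StC xC].
  rewrite inE (mem_cover_trivIset trivP SP (subsetP StP C StC) xC).
  by rewrite (disjointFl dSSt StC).
rewrite (wt_partition _ _ partP') /bval; apply: ler_sum => Q P'Q.
apply: min_wt_le_wt_symdiffI => //.
have [S'Q | S'nQ] := boolP (Q \in S').
  by rewrite bigcup_sup.
apply/orP; right; rewrite disjoints_subset; apply/subsetP => x Qx.
by rewrite inE (mem_cover_trivIset trivP' sS'P' P'Q Qx) (negbTE S'nQ).
Qed.

Theorem proposition6 (R : realFieldType) (T : finType) (w : T -> R)
  (P P' : {set {set T}}) (Ps Pt : {set T}) (Ss St S : {set {set T}}) :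
  (forall x, 0 < w x) ->
  partition P [set: T] -> partition P' [set: T] ->
  Ps \in P -> Pt \in P -> Ps != Pt ->
  Ss \subset P -> St \subset P -> Ps \in Ss -> Pt \in St -> [disjoint Ss & St] ->
  S \subset P -> Ss \subset S -> [disjoint S & St] ->
  bval w P' Ss St <= phi w P' S.
Proof.
move=> w_gt0 partP partP' _ _ _ _ StP _ _ _ SP sSsS dSSt.
have w_ge0 x : 0 <= w x by apply: ltW.
have trivP : trivIset P by case/and3P: partP.
rewrite /phi; case: arg_minP => [|S' sS'P' _]; first exact: sub0set.
exact: (bval_le_wt_symdiff w_ge0 trivP partP' StP SP sSsS dSSt sS'P').
Qed.
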